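(* Let $p>2$ be a prime and $d>0$ an integer with $d\not\equiv 0\pmod p$, and suppose $-1\in QR_p$. Let $N_p$ be the number of solutions $(x,y)\in\mathbb{Z}_p\times\mathbb{Z}_p$ of $$y^2\equiv x^3-d^2x \pmod p,$$ and let $n_1$ be the number of distinct fourth powers $u=y^4\in\mathbb{Z}_p^*$ ($y\in\mathbb{Z}_p^*$) such that $u-1\in QR_p$. Then $$N_p=8n_1+7 \text{ if } d\in QR_p,\qquad N_p=-8n_1+2p-7 \text{ if } d\in QNR_p .$$
   Context: $\mathbb{Z}_p$ denotes the integers modulo $p$, $\mathbb{Z}_p^*=\{1,\dots,p-1\}$. $QR_p=\{x\in\mathbb{Z}_p^*: \exists y\in\mathbb{Z}_p^*,\ y^2\equiv x \pmod p\}$ is the set of nonzero quadratic residues modulo $p$ and $QNR_p=\mathbb{Z}_p^*\setminus QR_p$ the set of quadratic nonresidues; $d$ is regarded as an element of $\mathbb{Z}_p^*$ via reduction mod $p$. *)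

From mathcomp Require Import all_boot all_algebra.
Set Implicit Arguments. Unset Strict Implicit. Unset Printing Implicit Defensive.

(* Residues mod p are represented by 'I_p (values 0..p-1); arithmetic is on nat mod p. *)

Definition QR (p x : nat) : bool :=
  (x %% p != 0) && [exists y : 'I_p, (y != 0 :> nat) && ((y * y) %% p == x %% p)].

Definition QNR (p x : nat) : bool := (x %% p != 0) && ~~ QR p x.

Definition Np (p d : nat) : nat :=
  #|[set xy : 'I_p * 'I_p |
      ((xy.2 : nat) ^ 2 + d ^ 2 * xy.1 == (xy.1 : nat) ^ 3 %[mod p])]|.

Definition n1 (p : nat) : nat :=
  #|[set u : 'I_p | [exists y : 'I_p, (y != 0 :> nat) && ((y : nat) ^ 4 %% p == u)]
                   && QR p (u + p - 1)]|.

From mathcomp Require Import all_boot all_algebra zify ring.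
Set Implicit Arguments. Unset Strict Implicit. Unset Printing Implicit Defensive.
Import GRing.Theory.
Local Open Scope ring_scope.

(* Work in a finite field F with 2 != 0 and -1 a square, and write [qr] for "nonzero
   square".  Counting the points over each x gives N = #{f x = 0} + 2 #{qr (f x)} for
   f x = x^3 - d^2 x, whose roots are 0 and +-d.  Since f (d t) = d^3 (t^3 - t), the
   second count is k := #{t | qr (t^3 - t)} if d is a square, and #F - 3 - k otherwise.
   As -1 is a square, qr (t^3 - t) holds iff t and t^2 - 1 are both squares or both
   not, so inclusion-exclusion computes k from three counts: #{qr t} = (#F - 1)/2;
   #{qr (t^2 - 1)} = (#F - 3)/2, read off the conic z^2 = t^2 - 1, which is
   parametrised by s |-> ((s + 1/s)/2, (1/s - s)/2); and #{qr t, qr (t^2 - 1)} = 2 n1,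
   as t |-> t^2 is two-to-one onto the fourth powers u with qr (u - 1).  This yields
   k = 4 n1 + 2. *)


Lemma card_two_to_one (T U : finType) (S : {set T}) (V : {set U}) (g : T -> U) (s : T -> T) :
  {in S, forall x, g x \in V} ->
  {in V, forall u, exists2 x, x \in S & g x = u} ->
  {in S, forall x, [/\ s x \in S, s x != x & g (s x) = g x]} ->
  {in S &, forall x y, g x = g y -> y = x \/ y = s x} ->
  #|S| = (2 * #|V|)%N.
Proof.
move=> gV gS sS g_inj.
rewrite -!sum1_card (partition_big g (mem V)) //= big_distrr /=.
apply: eq_bigr => u uV; have [x xS gx] := gS u uV; have [sxS sxx gsx] := sS x xS.
rewrite sum1_card (@eq_card _ _ [set x; s x]); first by rewrite cards2 eq_sym sxx.
move=> y; rewrite !inE /=; apply/andP/orP => [[yS /eqP gy]|[] /eqP ->].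
- by case: (g_inj x y xS yS (etrans gx (esym gy))) => ->; [left|right].
- by rewrite xS gx.
- by rewrite sxS gsx gx.
Qed.

Lemma card_eqb (T : finType) (P Q : pred T) :
  (#|[set x | P x == Q x]| + #|[set x | P x]| + #|[set x | Q x]| =
   #|T| + 2 * #|[set x | P x && Q x]|)%N.
Proof.
set A := [set x | P x]; set B := [set x | Q x].
have -> : [set x | P x && Q x] = A :&: B by apply/setP => x; rewrite !inE.
have -> : [set x | P x == Q x] = (A :&: B) :|: ~: (A :|: B).
  by apply/setP => x; rewrite !inE; case: (P x); case: (Q x).
have disj : (A :&: B) :&: ~: (A :|: B) = set0.
  by apply/setP => x; rewrite !inE; case: (P x); case: (Q x).
have := cardsU (A :&: B) (~: (A :|: B)); rewrite disj cards0.
have := cardsUI A B; have := cardsC (A :|: B); lia.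
Qed.

Lemma card_preim_bij (T U : finType) (f : T -> U) (g : U -> T) (Q : pred U) :
  cancel f g -> cancel g f -> #|[set x | Q (f x)]| = #|[set y | Q y]|.
Proof.
move=> fK gK; rewrite -(on_card_preimset (onW_bij _ (Bijective fK gK))).
by apply: eq_card => x; rewrite !inE.
Qed.

Lemma existsb_can (T U : finType) (f : T -> U) (g : U -> T) (Q : pred U) :
  cancel g f -> [exists x, Q (f x)] = [exists y, Q y].
Proof.
move=> gK; apply/existsP/existsP => [[x Qx]|[y Qy]]; first by exists (f x).
by exists (g y); rewrite gK.
Qed.

Section QuadraticResidues.

Variable F : finFieldType.

Definition qr (a : F) : bool := (a != 0) && [exists y, y * y == a].

Lemma qr0 : qr 0 = false.
Proof. by rewrite /qr eqxx. Qed.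

Lemma qr_neq0 (a : F) : qr a -> a != 0.
Proof. by case/andP. Qed.

Lemma qr_sqr (x : F) : x != 0 -> qr (x * x).
Proof. by move=> x0; rewrite /qr mulf_neq0 //=; apply/existsP; exists x. Qed.

Lemma qrP (a : F) : qr a -> exists2 y, y != 0 & a = y * y.
Proof.
case/andP=> a0 /existsP[y /eqP ya]; exists y => //.
by apply: contraNneq a0 => y0; rewrite -ya y0 mul0r.
Qed.

Lemma qrMl (a b : F) : qr a -> qr (a * b) = qr b.
Proof.
move=> /qrP[u u0 ->]; have [->|b0] := eqVneq b 0; first by rewrite mulr0.
apply/idP/idP => [/qrP[w w0 e]|/qrP[v v0 ->]]; last first.
  by rewrite mulrACA qr_sqr ?mulf_neq0.
rewrite /qr b0; apply/existsP; exists (w / u); apply/eqP.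
by rewrite mulrACA -invfM -e mulrAC divff ?mul1r ?mulf_neq0.
Qed.

Lemma qr1 : qr 1.
Proof. by rewrite -(mulr1 1) qr_sqr ?oner_neq0. Qed.

Lemma qrX3 (a : F) : qr (a ^+ 3) = qr a.
Proof.
have [->|a0] := eqVneq a 0; first by rewrite expr0n.
by rewrite exprS mulrC expr2 qrMl ?qr_sqr.
Qed.

Lemma mulrr_eq (x y : F) : x * x = y * y -> y = x \/ y = - x.
Proof.
move=> e; have : y ^+ 2 == x ^+ 2 by rewrite !expr2 e.
by rewrite eqf_sqr => /orP[] /eqP ->; [left|right].
Qed.

Hypothesis two_neq0 : (2 : F) != 0.

Lemma oppr_eq_self (x : F) : (- x == x) = (x == 0).
Proof.
by rewrite eq_sym -subr_eq0 opprK -mulr2n -mulr_natl mulf_eq0 (negPf two_neq0).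
Qed.

Lemma card_qr : (2 * #|[set a : F | qr a]|).+1%N = #|F|.
Proof.
have <- : #|[set x : F | x != 0]| = (2 * #|[set a : F | qr a]|)%N.
  apply: (card_two_to_one (g := fun x => x * x) (s := -%R)) => [x|u|x|x y _ _ /mulrr_eq//].
  - by rewrite !inE; apply: qr_sqr.
  - by rewrite inE => /qrP[y y0 ->]; exists y; rewrite ?inE.
  - by rewrite !inE => x0; rewrite oppr_eq0 oppr_eq_self x0 mulrNN.
have -> : [set x : F | x != 0] = [set~ 0] by apply/setP => x; rewrite !inE.
by rewrite cardsC1 prednK //; apply/card_gt0P; exists 0.
Qed.

Lemma card_nqr : #|[set x : F | (x != 0) && ~~ qr x]| = #|[set x | qr x]|.
Proof.
have := card_eqb qr (fun x : F => x == 0); rewrite -card_qr.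
have -> : [set x | qr x == (x == 0)] = [set x : F | (x != 0) && ~~ qr x].
  apply/setP => x; rewrite !inE; have [->|x0] := eqVneq x 0; first by rewrite qr0.
  by case: (qr x).
have -> : [set x : F | x == 0] = [set 0] by apply/setP => x; rewrite !inE.
have -> : [set x : F | qr x && (x == 0)] = set0.
  by apply/setP => x; rewrite !inE; have [->|_] := eqVneq x 0; rewrite ?qr0 ?andbF.
by rewrite cards1 cards0 muln0 addn0 addn1 mul2n -addnn => -[/addIn].
Qed.

Lemma qr_mul (a b : F) : a != 0 -> b != 0 -> qr (a * b) = (qr a == qr b).
Proof.
move=> a0 b0; have [qa|na] := boolP (qr a); first by rewrite qrMl // eq_sym eqb_id.
have [qb|nb] := boolP (qr b); first by rewrite mulrC qrMl // (negPf na).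
set I := [set a * x | x in [set x | qr x]].
have I_nqr : I = [set x | (x != 0) && ~~ qr x].
  apply/eqP; rewrite eqEcard card_imset; last exact: (mulfI a0).
  rewrite card_nqr leqnn andbT; apply/subsetP => y /imsetP[x]; rewrite !inE => qx ->.
  by rewrite mulf_neq0 ?(qr_neq0 qx) //= mulrC qrMl.
have : b \in I by rewrite I_nqr !inE b0 nb.
case/imsetP => x; rewrite inE => qx ->.
by rewrite mulrA qrMl ?qr_sqr.
Qed.

Lemma card_curve (h : F -> F) :
  #|[set xy : F * F | xy.2 * xy.2 == h xy.1]| =
  (#|[set x | h x == 0%R]| + 2 * #|[set x | qr (h x)]|)%N.
Proof.
set C := [set xy : F * F | xy.2 * xy.2 == h xy.1].
rewrite -(cardsID [set xy : F * F | xy.2 == 0] C); congr (_ + _)%N.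
  have -> : C :&: [set xy | xy.2 == 0] = [set (x, 0 : F) | x in [set x | h x == 0]].
    apply/setP => -[x y]; rewrite !inE /=; apply/andP/imsetP => [[/eqP e /eqP y0]|[x']].
      by exists x; [rewrite inE -e y0 mul0r | rewrite y0].
    by rewrite inE => /eqP hx [-> ->]; rewrite mul0r hx.
  by rewrite card_imset // => x x' [].
apply: (card_two_to_one (g := fst) (s := fun xy => (xy.1, - xy.2))) => [[x y]|u|[x y]|].
- by rewrite !inE /= => /andP[y0 /eqP <-]; apply: qr_sqr.
- by rewrite inE => /qrP[y y0 e]; exists (u, y); rewrite // !inE /= y0 e eqxx.
- rewrite !inE /= => /andP[y0 e]; rewrite mulrNN e oppr_eq0 y0 xpair_eqE eqxx.
  by rewrite oppr_eq_self.
- move=> [x y] [x' y']; rewrite !inE /= => /andP[_ /eqP e] /andP[_ /eqP e'] ex.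
  by subst x'; case: (mulrr_eq (etrans e (esym e'))) => ->; [left|right].
Qed.

Lemma card_conic : #|[set tz : F * F | tz.2 * tz.2 == tz.1 * tz.1 - 1]| = #|F|.-1.
Proof.
pose h (s : F) := ((s + s^-1) / 2, (s^-1 - s) / 2).
have -> : [set tz : F * F | tz.2 * tz.2 == tz.1 * tz.1 - 1] = h @: [set~ 0].
  apply/setP => -[t z]; rewrite !inE /=; apply/idP/imsetP => [/eqP e|[s]].
    have e1 : (t - z) * (t + z) = 1 by rewrite mulrDr !mulrBl e; ring.
    have s0 : t - z != 0 by apply: contra_eq_neq e1 => ->; rewrite mul0r eq_sym oner_neq0.
    have si : (t - z)^-1 = t + z by rewrite -[LHS]mulr1 -e1 mulrA mulVf ?mul1r.
    exists (t - z); first by rewrite !inE.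
    by rewrite /h si; congr (_, _); field.
  rewrite !inE => s0 [-> ->]; apply/eqP; field; exact/andP.
rewrite card_in_imset ?cardsC1 // => s s' /[!inE] s0 s0' e.
have hK u : u != 0 -> (h u).1 - (h u).2 = u by move=> u0; rewrite /h /=; field; exact/andP.
by rewrite -(hK s) // -(hK s') // e.
Qed.

Lemma card_qr_sqr_sub1 : (2 * #|[set t : F | qr (t * t - 1)%R]| + 3)%N = #|F|.
Proof.
have := card_curve (fun t => t * t - 1); rewrite card_conic.
have -> : [set t : F | t * t - 1 == 0] = [set 1; -1].
  by apply/setP => t; rewrite !inE subr_eq0 -expr2 -(expr1n F 2) eqf_sqr expr1n.
rewrite cards2 eq_sym oppr_eq_self oner_eq0 /=.
have : (0 < #|F|)%N by apply/card_gt0P; exists 0.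
lia.
Qed.

Lemma card_cubic_roots (c : F) : c != 0 -> #|[set x : F | x ^+ 3 - c ^+ 2 * x == 0]| = 3%N.
Proof.
move=> c0; have -> : [set x : F | x ^+ 3 - c ^+ 2 * x == 0] = 0 |: [set c; - c].
  apply/setP => x; rewrite !inE.
  have -> : x ^+ 3 - c ^+ 2 * x = x * ((x - c) * (x + c)) by ring.
  by rewrite !mulf_eq0 subr_eq0 addr_eq0.
have cNc : c != - c by rewrite eq_sym oppr_eq_self.
by rewrite cardsU1 cards2 !inE eq_sym (negPf c0) eq_sym oppr_eq0 (negPf c0) cNc.
Qed.

Lemma card_qr_twist (e : F) (g : F -> F) : e != 0 -> ~~ qr e ->
  (#|[set x | qr (e * g x)%R]| + #|[set x | qr (g x)]| + #|[set x | g x == 0%R]|)%N = #|F|.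
Proof.
move=> e0 ne; have := card_eqb (fun x => qr (g x)) (fun x => g x == 0).
have -> : [set x | qr (g x) == (g x == 0)] = [set x | qr (e * g x)].
  apply/setP => x; rewrite !inE; have [->|gx0] := eqVneq (g x) 0; first by rewrite mulr0 qr0.
  by rewrite qr_mul // (negPf ne); case: (qr (g x)).
have -> : [set x | qr (g x) && (g x == 0)] = set0.
  by apply/setP => x; rewrite !inE; have [->|] := eqVneq (g x) 0; rewrite ?qr0 ?andbF.
by rewrite cards0 muln0 addn0.
Qed.

Definition Ncurve (d : F) : nat :=
  #|[set xy : F * F | xy.2 * xy.2 == xy.1 ^+ 3 - d ^+ 2 * xy.1]|.

Lemma Ncurve_scale (d : F) : d != 0 ->
  Ncurve d = (3 + 2 * #|[set t | qr (d ^+ 3 * (t ^+ 3 - t))%R]|)%N.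
Proof.
move=> d0; rewrite /Ncurve (card_curve (fun x => x ^+ 3 - d ^+ 2 * x)).
rewrite card_cubic_roots //; congr (_ + 2 * _)%N.
rewrite -(card_preimset _ (mulfI d0)); apply: eq_card => t; rewrite !inE.
by congr qr; ring.
Qed.

Hypothesis qrN1 : qr (-1).

Lemma qrN (a : F) : qr (- a) = qr a.
Proof. by rewrite -mulN1r qrMl. Qed.

Lemma qr_cubic (t : F) : qr (t ^+ 3 - t) = (qr t == qr (t * t - 1)).
Proof.
have cubicE : t ^+ 3 - t = t * (t * t - 1) by ring.
have [->|t0] := eqVneq t 0; first by rewrite expr0n subr0 mul0r sub0r qr0 qrN1.
have [t2_eq0|t2_neq0] := eqVneq (t * t - 1) 0; last by rewrite cubicE qr_mul.
have qt : qr t.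
  move/eqP: (t2_eq0); rewrite subr_eq0 -expr2 -(expr1n F 2) eqf_sqr.
  by case/orP => /eqP ->; rewrite ?qrN qr1.
by rewrite cubicE t2_eq0 mulr0 qr0 qt.
Qed.

Definition n1F : nat :=
  #|[set u : F | [exists y, (y != 0) && (y ^+ 4 == u)] && qr (u - 1)]|.

Lemma card_qr_qr_sqr_sub1 : #|[set t : F | qr t && qr (t * t - 1)]| = (2 * n1F)%N.
Proof.
apply: (card_two_to_one (g := fun t => t * t) (s := -%R)) => [t|u|t|t t' _ _ /mulrr_eq//].
- rewrite !inE => /andP[/qrP[y y0 ->] q1]; rewrite q1 andbT.
  by apply/existsP; exists y; rewrite y0 /=; apply/eqP; ring.
- rewrite inE => /andP[/existsP[y /andP[y0 /eqP e]] q1].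
  exists (y * y); last by rewrite -e; ring.
  by rewrite inE qr_sqr //= (_ : y * y * (y * y) = u) // -e; ring.
- rewrite !inE => /andP[qt q1].
  by rewrite qrN qt mulrNN q1 oppr_eq_self (qr_neq0 qt).
Qed.

Lemma card_qr_cubic : #|[set t : F | qr (t ^+ 3 - t)]| = (4 * n1F + 2)%N.
Proof.
have := card_eqb qr (fun t => qr (t * t - 1)); rewrite card_qr_qr_sqr_sub1.
have -> : [set t | qr t == qr (t * t - 1)] = [set t : F | qr (t ^+ 3 - t)].
  by apply/setP => t; rewrite !inE qr_cubic.
have := card_qr; have := card_qr_sqr_sub1.
(* [set] identifies differently elaborated copies of these cardinals, which [lia] would
   otherwise treat as distinct atoms. *)
set q := #|F|; set s := #|[set a : F | qr a]|.
set r := #|[set t : F | qr (t * t - 1)%R]|; set k := #|[set t : F | qr (t ^+ 3 - t)%R]|.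
lia.
Qed.

Lemma Ncurve_qr (d : F) : qr d -> Ncurve d = (8 * n1F + 7)%N.
Proof.
move=> qd; rewrite Ncurve_scale ?qr_neq0 //.
have -> : [set t | qr (d ^+ 3 * (t ^+ 3 - t))] = [set t : F | qr (t ^+ 3 - t)].
  by apply/setP => t; rewrite !inE qrMl ?qrX3.
by rewrite card_qr_cubic; lia.
Qed.

Lemma Ncurve_nqr (d : F) : d != 0 -> ~~ qr d -> (Ncurve d + 8 * n1F + 7 = 2 * #|F|)%N.
Proof.
move=> d0 nd; rewrite Ncurve_scale //.
have := card_qr_twist (fun t => t ^+ 3 - t) (expf_neq0 3 d0); rewrite qrX3 => /(_ nd).
have -> : [set t : F | t ^+ 3 - t == 0] = [set t | t ^+ 3 - 1 ^+ 2 * t == 0].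
  by apply/setP => t; rewrite !inE expr1n mul1r.
rewrite card_cubic_roots ?oner_neq0 // card_qr_cubic.
set q := #|F|; set c := #|[set t : F | qr (d ^+ 3 * (t ^+ 3 - t))%R]|; lia.
Qed.

End QuadraticResidues.

Section PrimeField.

Variable p : nat.
Hypothesis p_pr : prime p.

Lemma Fp_nat_eq (m n : nat) : ((m%:R : 'F_p) == n%:R) = (m == n %[mod p])%N.
Proof. by rewrite -val_eqE /= !val_Fp_nat. Qed.

Lemma Fp_nat_eq0 (m : nat) : ((m%:R : 'F_p) == 0) = (m %% p == 0)%N.
Proof. by rewrite -val_eqE /= val_Fp_nat. Qed.

Definition Fp_of_ord (i : 'I_p) : 'F_p := i%:R.
Definition ord_of_Fp (a : 'F_p) : 'I_p := cast_ord (Fp_cast p_pr) a.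

Lemma Fp_of_ordK : cancel Fp_of_ord ord_of_Fp.
Proof. by move=> i; apply: val_inj; rewrite /= val_Fp_nat // modn_small. Qed.

Lemma ord_of_FpK : cancel ord_of_Fp Fp_of_ord.
Proof. by move=> a; apply: natr_Zp. Qed.

Lemma Fp_of_ord_eq0 (i : 'I_p) : (Fp_of_ord i == 0) = (i == 0 :> nat).
Proof. by rewrite Fp_nat_eq0 modn_small. Qed.

Lemma QR_qr (m : nat) : QR p m = qr (m%:R : 'F_p).
Proof.
rewrite /QR /qr Fp_nat_eq0; have [//|m0] := eqVneq (m %% p)%N 0%N.
rewrite -(existsb_can _ ord_of_FpK); apply: eq_existsb => i.
rewrite -natrM Fp_nat_eq; have [i0|] //= := eqVneq (i : nat) 0%N.
by rewrite i0 mod0n eq_sym (negPf m0).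
Qed.

Lemma Np_Ncurve (d : nat) : Np p d = Ncurve (d%:R : 'F_p).
Proof.
pose f (xy : 'I_p * 'I_p) := (Fp_of_ord xy.1, Fp_of_ord xy.2).
pose g (xy : 'F_p * 'F_p) := (ord_of_Fp xy.1, ord_of_Fp xy.2).
have fK : cancel f g by move=> [x y]; rewrite /f /g /= !Fp_of_ordK.
have gK : cancel g f by move=> [x y]; rewrite /f /g /= !ord_of_FpK.
rewrite /Ncurve -(card_preim_bij _ fK gK); apply: eq_card => -[x y]; rewrite !inE /=.
by rewrite [RHS]eq_sym subr_eq -!natrX -!natrM -natrD Fp_nat_eq eq_sym.
Qed.

Lemma n1_n1F : n1 p = n1F 'F_p.
Proof.
rewrite /n1F -(card_preim_bij _ Fp_of_ordK ord_of_FpK); apply: eq_card => u; rewrite !inE.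
congr andb.
  rewrite -(existsb_can _ ord_of_FpK); apply: eq_existsb => y.
  by rewrite Fp_of_ord_eq0 -natrX Fp_nat_eq (modn_small (ltn_ord u)).
by rewrite QR_qr natrB ?addn_gt0 ?(prime_gt0 p_pr) ?orbT // natrD pchar_Fp_0 ?addr0.
Qed.

End PrimeField.

Theorem lemma3 (p d : nat) :
  prime p -> (2 < p)%N -> (0 < d)%N -> (d %% p != 0)%N -> QR p (p - 1) ->
  (QR p d -> (Np p d)%:Z = 8 * (n1 p)%:Z + 7) /\
  (QNR p d -> (Np p d)%:Z = - 8 * (n1 p)%:Z + 2 * p%:Z - 7).
Proof.
move=> p_pr p_gt2 _ dNp qrN1.
have two_neq0 : (2 : 'F_p) != 0 by rewrite Fp_nat_eq0 // modn_small.
have qrN1F : qr (-1 : 'F_p).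
  by move: qrN1; rewrite QR_qr // natrB ?prime_gt0 // pchar_Fp_0 // sub0r.
have d0 : (d%:R : 'F_p) != 0 by rewrite Fp_nat_eq0.
rewrite Np_Ncurve // n1_n1F //; split.
  by rewrite QR_qr // => /(Ncurve_qr two_neq0 qrN1F) ->.
rewrite /QNR QR_qr // => /andP[_ /(Ncurve_nqr two_neq0 qrN1F d0)].
rewrite card_Fp //; set n := n1F _; lia.
Qed.
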